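(* Let $n\neq 1$ be a real number, $k_n=n-1$, and $k_0,k_1,k_2\in\mathbb{R}$. On the phase space with canonical coordinates $(r,\phi,p_r,p_\phi)$, $r>0$, consider $$H_{na}'=\tfrac12 r^{2n}\Big(p_r^2+\tfrac{p_\phi^2}{r^2}\Big)+\frac{k_0}{r^{2k_n}}+\frac{1}{r^{k_n}}\big(k_1\cos(k_n\phi)+k_2\sin(k_n\phi)\big).$$ With $P_1=r^n\big(p_r\cos(k_n\phi)+\tfrac1r p_\phi\sin(k_n\phi)\big)$ and $P_2=r^n\big(p_r\sin(k_n\phi)-\tfrac1r p_\phi\cos(k_n\phi)\big)$, the function $$J_{a3}'=2k_0p_\phi+k_2P_1-k_1P_2,$$ which is linear in the momenta, is a constant of motion of $H_{na}'$, i.e. $\{J_{a3}',H_{na}'\}=0$.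
   Context: The Poisson bracket is the canonical one in $(r,\phi,p_r,p_\phi)$. A constant of motion of $H$ is a function $F$ with $\{F,H\}=0$. *)

From Stdlib Require Import Reals.
From Coquelicot Require Import Coquelicot.
Open Scope R_scope.

Definition phase_fun := R -> R -> R -> R -> R.

Definition poisson (F G : phase_fun) (r phi pr pphi : R) : R :=
  Derive (fun x => F x phi pr pphi) r * Derive (fun x => G r phi x pphi) pr
  - Derive (fun x => F r phi x pphi) pr * Derive (fun x => G x phi pr pphi) r
  + Derive (fun x => F r x pr pphi) phi * Derive (fun x => G r phi pr x) pphi
  - Derive (fun x => F r phi pr x) pphi * Derive (fun x => G r x pr pphi) phi.

Definition kn (n : R) : R := n - 1.

(* H'_na; real powers r^a are Rpower r a (meaningful for r > 0). *)
Definition H_na (n k0 k1 k2 : R) : phase_fun := fun r phi pr pphi =>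
  / 2 * Rpower r (2 * n) * (pr ^ 2 + pphi ^ 2 / r ^ 2)
  + k0 / Rpower r (2 * kn n)
  + / Rpower r (kn n) * (k1 * cos (kn n * phi) + k2 * sin (kn n * phi)).

Definition P1 (n : R) : phase_fun := fun r phi pr pphi =>
  Rpower r n * (pr * cos (kn n * phi) + / r * pphi * sin (kn n * phi)).

Definition P2 (n : R) : phase_fun := fun r phi pr pphi =>
  Rpower r n * (pr * sin (kn n * phi) - / r * pphi * cos (kn n * phi)).

Definition J_a3 (n k0 k1 k2 : R) : phase_fun := fun r phi pr pphi =>
  2 * k0 * pphi + k2 * P1 n r phi pr pphi - k1 * P2 n r phi pr pphi.

(* Write Q := r^(n-1), so that r^n = r Q and the r-powers in H'_na become Q^2 and Q^-2;
   then J'_a3 = 2 k0 p_phi + Q (r p_r W + p_phi V) and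
   H'_na = Q^2 (r^2 p_r^2 + p_phi^2) / 2 + k0 / Q^2 + V / Q, where
   V = k1 cos(k_n phi) + k2 sin(k_n phi) and W = k2 cos(k_n phi) - k1 sin(k_n phi)
   satisfy V' = k_n W, W' = -k_n V and r Q' = k_n Q.  In the bracket the terms cubic in Q
   (kinetic part of H) and the terms in 1/Q (potential part) cancel separately. *)
From Stdlib Require Import Reals.
From Coquelicot Require Import Coquelicot.
Open Scope R_scope.

Lemma Rpower_succ (x a : R) : 0 < x -> Rpower x (a + 1) = x * Rpower x a.
Proof. intros Hx. rewrite Rpower_plus, Rpower_1 by exact Hx. ring. Qed.

Lemma Rpower_double (x a : R) : Rpower x (2 * a) = Rpower x a ^ 2.
Proof. unfold Rpower. rewrite <- Rsqr_pow2. unfold Rsqr. rewrite <- exp_plus. f_equal. ring. Qed.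

Lemma Rpower_neq0 (x a : R) : Rpower x a <> 0.
Proof. apply Rgt_not_eq, exp_pos. Qed.

Lemma is_derive_Rpower (x a : R) :
  0 < x -> is_derive (fun t => Rpower t a) x (a * Rpower x a / x).
Proof.
  intros Hx. apply is_derive_Reals.
  replace (a * Rpower x a / x) with (a * Rpower x (a - 1)).
  - now apply derivable_pt_lim_power.
  - unfold Rminus. rewrite Rpower_plus, Rpower_Ropp, Rpower_1 by exact Hx.
    field. now apply Rgt_not_eq.
Qed.

Lemma ex_derive_Rpower (x a : R) : 0 < x -> ex_derive (fun t => Rpower t a) x.
Proof. intros Hx. eexists. now apply is_derive_Rpower. Qed.

Lemma Derive_Rpower (x a : R) :
  0 < x -> Derive (fun t => Rpower t a) x = a * Rpower x a / x.
Proof. intros Hx. now apply is_derive_unique, is_derive_Rpower. Qed.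

Lemma poisson_ext_pos (F F' G G' : phase_fun) (r phi pr pphi : R) :
  0 < r ->
  (forall r' phi' pr' pphi', 0 < r' -> F r' phi' pr' pphi' = F' r' phi' pr' pphi') ->
  (forall r' phi' pr' pphi', 0 < r' -> G r' phi' pr' pphi' = G' r' phi' pr' pphi') ->
  poisson F G r phi pr pphi = poisson F' G' r phi pr pphi.
Proof.
  intros Hr HF HG. unfold poisson.
  assert (Hloc : forall P : R -> Prop,
             (forall t, 0 < t -> P t) -> locally r P).
  { intros P HP. exact (locally_open _ _ (open_gt 0) HP r Hr). }
  rewrite (Derive_ext_loc (fun x => F x phi pr pphi) (fun x => F' x phi pr pphi))
    by (apply Hloc; intros; now apply HF).
  rewrite (Derive_ext_loc (fun x => G x phi pr pphi) (fun x => G' x phi pr pphi))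
    by (apply Hloc; intros; now apply HG).
  rewrite !(Derive_ext (fun x => F r _ _ _) (fun x => F' r _ _ _)) by (intros; now apply HF).
  rewrite !(Derive_ext (fun x => G r _ _ _) (fun x => G' r _ _ _)) by (intros; now apply HG).
  reflexivity.
Qed.

Section Bracket.

Variables n k0 k1 k2 : R.

Definition pot_V (phi : R) : R := k1 * cos (kn n * phi) + k2 * sin (kn n * phi).
Definition pot_W (phi : R) : R := k2 * cos (kn n * phi) - k1 * sin (kn n * phi).

Definition J_Q : phase_fun := fun r phi pr pphi =>
  2 * k0 * pphi + Rpower r (kn n) * (r * pr * pot_W phi + pphi * pot_V phi).

Definition H_Q : phase_fun := fun r phi pr pphi =>
  / 2 * Rpower r (kn n) ^ 2 * (r ^ 2 * pr ^ 2 + pphi ^ 2)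
  + k0 / Rpower r (kn n) ^ 2 + pot_V phi / Rpower r (kn n).

Lemma Rpower_kn (r : R) : 0 < r -> Rpower r n = r * Rpower r (kn n).
Proof. intros Hr. rewrite <- Rpower_succ by exact Hr. unfold kn. f_equal. ring. Qed.

Lemma J_a3_Q (r phi pr pphi : R) :
  0 < r -> J_a3 n k0 k1 k2 r phi pr pphi = J_Q r phi pr pphi.
Proof.
  intros Hr. unfold J_a3, J_Q, P1, P2, pot_V, pot_W. rewrite Rpower_kn by exact Hr.
  field. now apply Rgt_not_eq.
Qed.

Lemma H_na_Q (r phi pr pphi : R) :
  0 < r -> H_na n k0 k1 k2 r phi pr pphi = H_Q r phi pr pphi.
Proof.
  intros Hr. unfold H_na, H_Q, pot_V.
  rewrite !Rpower_double, Rpower_kn by exact Hr.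
  field. split; [apply Rpower_neq0 | now apply Rgt_not_eq].
Qed.

Variables r phi pr pphi : R.
Hypothesis r_pos : 0 < r.

Local Notation Q := (Rpower r (kn n)).

Ltac partial_derivative :=
  apply is_derive_unique; unfold J_Q, H_Q, pot_V, pot_W; auto_derive;
  [repeat split; first [apply ex_derive_Rpower, r_pos | apply Rpower_neq0
                       | rewrite Rmult_1_r; apply Rmult_integral_contrapositive_currified;
                         apply Rpower_neq0]
  | rewrite ?Derive_Rpower by exact r_pos; field;
    repeat split; first [apply Rpower_neq0 | now apply Rgt_not_eq]].

Lemma J_Q_dr : Derive (fun x => J_Q x phi pr pphi) r
  = kn n * Q / r * (r * pr * pot_W phi + pphi * pot_V phi) + Q * pr * pot_W phi.
Proof. partial_derivative. Qed.

Lemma J_Q_dpr : Derive (fun x => J_Q r phi x pphi) pr = Q * r * pot_W phi.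
Proof. partial_derivative. Qed.

Lemma J_Q_dphi : Derive (fun x => J_Q r x pr pphi) phi
  = kn n * Q * (pphi * pot_W phi - r * pr * pot_V phi).
Proof. partial_derivative. Qed.

Lemma J_Q_dpphi : Derive (fun x => J_Q r phi pr x) pphi = 2 * k0 + Q * pot_V phi.
Proof. partial_derivative. Qed.

Lemma H_Q_dr : Derive (fun x => H_Q x phi pr pphi) r
  = kn n * Q ^ 2 / r * (r ^ 2 * pr ^ 2 + pphi ^ 2) + Q ^ 2 * r * pr ^ 2
    - 2 * kn n * k0 / (r * Q ^ 2) - kn n * pot_V phi / (r * Q).
Proof. partial_derivative. Qed.

Lemma H_Q_dpr : Derive (fun x => H_Q r phi x pphi) pr = Q ^ 2 * r ^ 2 * pr.
Proof. partial_derivative. Qed.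

Lemma H_Q_dphi : Derive (fun x => H_Q r x pr pphi) phi = kn n * pot_W phi / Q.
Proof. partial_derivative. Qed.

Lemma H_Q_dpphi : Derive (fun x => H_Q r phi pr x) pphi = Q ^ 2 * pphi.
Proof. partial_derivative. Qed.

Lemma poisson_J_Q_H_Q : poisson J_Q H_Q r phi pr pphi = 0.
Proof.
  unfold poisson.
  rewrite J_Q_dr, J_Q_dpr, J_Q_dphi, J_Q_dpphi, H_Q_dr, H_Q_dpr, H_Q_dphi, H_Q_dpphi.
  field. split; [apply Rpower_neq0 | now apply Rgt_not_eq].
Qed.

End Bracket.

Theorem mainTheorem3 (n k0 k1 k2 : R) (hn : n <> 1) :
  forall r phi pr pphi : R, 0 < r ->
    poisson (J_a3 n k0 k1 k2) (H_na n k0 k1 k2) r phi pr pphi = 0.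
Proof.
  intros r phi pr pphi Hr.
  rewrite (poisson_ext_pos _ (J_Q n k0 k1 k2) _ (H_Q n k0 k1 k2)) by
    first [exact Hr | intros; now apply J_a3_Q | intros; now apply H_na_Q].
  now apply poisson_J_Q_H_Q.
Qed.
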